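(* Along a $C^1$ curve $z(s)$ with tangent $v^\mu=dz^\mu/ds$ in a Lorentzian manifold, let $p^\mu(s)$, antisymmetric $S^{\mu\nu}(s)$, a timelike unit vector $u^\mu(s)$ ($u_\mu u^\mu=-1$) and a scalar $M(s)>0$ be differentiable and satisfy $p^\mu=Mu^\mu$, $u_\mu S^{\mu\nu}=0$, and $u^\kappa v_\kappa\neq0$. Define the force and torque by $$F^\nu=\frac{\delta p^\nu}{\delta s}-\tfrac12 S^{\kappa\lambda}v^\mu R_{\kappa\lambda\mu}{}^{\nu},\qquad L^{\kappa\lambda}=\frac{\delta S^{\kappa\lambda}}{\delta s}-2p^{[\kappa}v^{\lambda]}.$$ Then $$\frac{dM}{ds}=(u^\kappa v_\kappa)^{-1}\Big[F^\mu v_\mu+u_\nu\frac{\delta u_\mu}{\delta s}L^{\mu\nu}\Big].$$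
   Context: $\delta/\delta s=v^\mu\nabla_\mu$ is the covariant derivative along the curve; $R_{\kappa\lambda\mu\nu}$ is the Riemann tensor, antisymmetric in its last two indices (and in its first two); $A^{[\kappa}B^{\lambda]}=\tfrac12(A^\kappa B^\lambda-A^\lambda B^\kappa)$. *)

From Stdlib Require Import Reals Lra.
Open Scope R_scope.

(* Points of a coordinate chart: nat -> R (coordinates 0..n-1 used). *)
Definition point := nat -> R.

Fixpoint sumI (n : nat) (f : nat -> R) : R :=
  match n with O => 0 | S k => sumI k f + f k end.

Definition eta (a b : nat) : R :=
  if Nat.eqb a b then (if Nat.eqb a 0 then -1 else 1) else 0.
Definition kron (a b : nat) : R := if Nat.eqb a b then 1 else 0.

(* A symmetric bilinear form G (components G mu nu, mu,nu < n) has
   Lorentzian signature (-,+,...,+): there is an invertible change of basis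
   E (columns e_a = E ^ a) with G(e_a,e_b) = eta_ab. *)
Definition lorentzian (n : nat) (G : nat -> nat -> R) : Prop :=
  (forall mu nu, (mu < n)%nat -> (nu < n)%nat -> G mu nu = G nu mu) /\
  exists E Einv : nat -> nat -> R,
    (forall a b, (a < n)%nat -> (b < n)%nat ->
       sumI n (fun mu => sumI n (fun nu => E mu a * E nu b * G mu nu)) = eta a b) /\
    (forall a b, (a < n)%nat -> (b < n)%nat ->
       sumI n (fun mu => Einv a mu * E mu b) = kron a b).

Definition lower (n : nat) (G : nat -> nat -> R) (X : nat -> R) (mu : nat) : R :=
  sumI n (fun nu => G mu nu * X nu).
Definition dot (n : nat) (G : nat -> nat -> R) (X Y : nat -> R) : R :=
  sumI n (fun mu => lower n G X mu * Y mu).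

(* Covariant derivative along the curve (tangent v, connection Gam,
   Gam x l a b = Gamma^l_{ab}(x)) of a vector field V^mu(s) whose ordinary
   derivative is dV:  dV^mu + Gamma^mu_{ab} v^a V^b. *)
Definition covD_vec (n : nat) (Gam : point -> nat -> nat -> nat -> R)
  (x : point) (v V dV : nat -> R) (mu : nat) : R :=
  dV mu + sumI n (fun a => sumI n (fun b => Gam x mu a b * v a * V b)).

Definition covD_2 (n : nat) (Gam : point -> nat -> nat -> nat -> R)
  (x : point) (v : nat -> R) (T dT : nat -> nat -> R) (k l : nat) : R :=
  dT k l
  + sumI n (fun a => sumI n (fun b => Gam x k a b * v a * T b l))
  + sumI n (fun a => sumI n (fun b => Gam x l a b * v a * T k b)).

From Stdlib Require Import Reals Lra Lia.
Open Scope R_scope.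

(* Write [D] for [δ/δs].  Metric compatibility gives [D] the Leibniz rule with respect to [g], so
   differentiating the constraints [u·u = -1] and [u_μ S^{μν} = 0] yields [Du·u = 0] and
   [u_μ DS^{μν} = - Du_μ S^{μν}].  Since [Dp = (dM/ds) u + M Du] and the curvature term of [F]
   is killed by [v_ν v^μ] (antisymmetry of [R_{κλμν}] in [μν]), [F·v = (dM/ds)(u·v) + M (Du·v)].
   In the torque term the [DS] part becomes [Du_μ Du_ν S^{νμ} = 0] and the [p v] part gives
   [- M (Du·v)]. *)

Lemma sumI_ext n f h : (forall i, (i < n)%nat -> f i = h i) -> sumI n f = sumI n h.
Proof.
  induction n as [|n IH]; intros E; simpl; [reflexivity|].
  rewrite IH by (intros; apply E; lia). rewrite E by lia. reflexivity.
Qed.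

Lemma sumI_add n f h : sumI n (fun i => f i + h i) = sumI n f + sumI n h.
Proof. induction n as [|n IH]; simpl; [ring | rewrite IH; ring]. Qed.

Lemma sumI_sub n f h : sumI n (fun i => f i - h i) = sumI n f - sumI n h.
Proof. induction n as [|n IH]; simpl; [ring | rewrite IH; ring]. Qed.

Lemma sumI_opp n f : sumI n (fun i => - f i) = - sumI n f.
Proof. induction n as [|n IH]; simpl; [ring | rewrite IH; ring]. Qed.

Lemma sumI_mul_l n c f : sumI n (fun i => c * f i) = c * sumI n f.
Proof. induction n as [|n IH]; simpl; [ring | rewrite IH; ring]. Qed.

Lemma sumI_mul_r n c f : sumI n (fun i => f i * c) = sumI n f * c.
Proof. induction n as [|n IH]; simpl; [ring | rewrite IH; ring]. Qed.

Lemma sumI_eq0 n f : (forall i, (i < n)%nat -> f i = 0) -> sumI n f = 0.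
Proof.
  induction n as [|n IH]; intros E; simpl; [reflexivity|].
  rewrite IH by (intros; apply E; lia). rewrite E by lia. ring.
Qed.

Lemma sumI_swap n m f :
  sumI n (fun i => sumI m (fun j => f i j)) = sumI m (fun j => sumI n (fun i => f i j)).
Proof.
  induction n as [|n IH]; simpl.
  - symmetry; now apply sumI_eq0.
  - now rewrite IH, <- sumI_add.
Qed.

Lemma sumI_mul n m f h :
  sumI n f * sumI m h = sumI n (fun i => sumI m (fun j => f i * h j)).
Proof.
  rewrite <- sumI_mul_r. apply sumI_ext; intros i _. now rewrite <- sumI_mul_l.
Qed.

Lemma sumI_antisym n f : (forall i j, (i < n)%nat -> (j < n)%nat -> f i j = - f j i) ->
  sumI n (fun i => sumI n (fun j => f i j)) = 0.
Proof.
  intros Ha.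
  assert (E : sumI n (fun i => sumI n (fun j => f i j))
              = - sumI n (fun j => sumI n (fun i => f i j))).
  { rewrite <- sumI_opp. apply sumI_ext; intros i Hi.
    rewrite <- sumI_opp. apply sumI_ext; intros j Hj. now apply Ha. }
  rewrite (sumI_swap n n (fun j i => f i j)) in E. lra.
Qed.

Lemma sumI_rev3 n f :
  sumI n (fun i => sumI n (fun j => sumI n (fun k => f i j k)))
  = sumI n (fun k => sumI n (fun j => sumI n (fun i => f i j k))).
Proof.
  transitivity (sumI n (fun i => sumI n (fun k => sumI n (fun j => f i j k)))).
  { apply sumI_ext; intros i _. apply sumI_swap. }
  rewrite sumI_swap. apply sumI_ext; intros k _. apply sumI_swap.
Qed.

Lemma sumI_swap14 n f :
  sumI n (fun i => sumI n (fun j => sumI n (fun k => sumI n (fun l => f i j k l))))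
  = sumI n (fun l => sumI n (fun j => sumI n (fun k => sumI n (fun i => f i j k l)))).
Proof.
  rewrite (sumI_rev3 n (fun i j k => sumI n (fun l => f i j k l))).
  transitivity (sumI n (fun k => sumI n (fun j => sumI n (fun l => sumI n (fun i => f i j k l))))).
  { apply sumI_ext; intros k _; apply sumI_ext; intros j _. apply sumI_swap. }
  apply (sumI_rev3 n (fun k j l => sumI n (fun i => f i j k l))).
Qed.

Lemma dot_expand n G X Y :
  dot n G X Y = sumI n (fun mu => sumI n (fun nu => G mu nu * X nu * Y mu)).
Proof.
  unfold dot, lower. apply sumI_ext; intros mu _. now rewrite <- sumI_mul_r.
Qed.

Lemma dot_ext n G X X' Y Y' :
  (forall i, (i < n)%nat -> X i = X' i) -> (forall i, (i < n)%nat -> Y i = Y' i) ->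
  dot n G X Y = dot n G X' Y'.
Proof.
  intros EX EY. rewrite !dot_expand.
  apply sumI_ext; intros mu Hmu; apply sumI_ext; intros nu Hnu. now rewrite EX, EY.
Qed.

Lemma dot_sym n G X Y : (forall i j, (i < n)%nat -> (j < n)%nat -> G i j = G j i) ->
  dot n G X Y = dot n G Y X.
Proof.
  intros Gsym. rewrite !dot_expand, sumI_swap.
  apply sumI_ext; intros i Hi; apply sumI_ext; intros j Hj. rewrite Gsym by assumption. ring.
Qed.

Lemma dot_add_l n G X X' Y : dot n G (fun i => X i + X' i) Y = dot n G X Y + dot n G X' Y.
Proof.
  rewrite !dot_expand, <- sumI_add. apply sumI_ext; intros mu _.
  rewrite <- sumI_add. apply sumI_ext; intros nu _. ring.
Qed.

Lemma dot_add_r n G X Y Y' : dot n G X (fun i => Y i + Y' i) = dot n G X Y + dot n G X Y'.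
Proof.
  rewrite !dot_expand, <- sumI_add. apply sumI_ext; intros mu _.
  rewrite <- sumI_add. apply sumI_ext; intros nu _. ring.
Qed.

Lemma dot_sub_l n G X X' Y : dot n G (fun i => X i - X' i) Y = dot n G X Y - dot n G X' Y.
Proof.
  rewrite !dot_expand, <- sumI_sub. apply sumI_ext; intros mu _.
  rewrite <- sumI_sub. apply sumI_ext; intros nu _. ring.
Qed.

Lemma dot_scal_l n G c X Y : dot n G (fun i => c * X i) Y = c * dot n G X Y.
Proof.
  rewrite !dot_expand, <- sumI_mul_l. apply sumI_ext; intros mu _.
  rewrite <- sumI_mul_l. apply sumI_ext; intros nu _. ring.
Qed.

Lemma dot_scal_r n G c X Y : dot n G X (fun i => c * Y i) = c * dot n G X Y.
Proof.
  rewrite !dot_expand, <- sumI_mul_l. apply sumI_ext; intros mu _.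
  rewrite <- sumI_mul_l. apply sumI_ext; intros nu _. ring.
Qed.

Lemma dot_sum_l n m G f Y :
  dot n G (fun nu => sumI m (fun k => f k nu)) Y = sumI m (fun k => dot n G (f k) Y).
Proof.
  induction m as [|m IH]; simpl.
  - rewrite dot_expand. apply sumI_eq0; intros mu _. apply sumI_eq0; intros nu _. ring.
  - now rewrite dot_add_l, IH.
Qed.

Definition christoffel_term n (Gm : nat -> nat -> nat -> R) (V Y : nat -> R) (l : nat) : R :=
  sumI n (fun a => sumI n (fun b => Gm l a b * V a * Y b)).

Definition metric_derivative n (G : nat -> nat -> R) (Gm : nat -> nat -> nat -> R)
    (V : nat -> R) (mu nu : nat) : R :=
  sumI n (fun a => V a * sumI n (fun l => Gm l a mu * G l nu + Gm l a nu * G mu l)).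

Lemma dot_metric_derivative n G Gm V X Y :
  dot n (metric_derivative n G Gm V) X Y
  = dot n G X (christoffel_term n Gm V Y) + dot n G (christoffel_term n Gm V X) Y.
Proof.
  rewrite !dot_expand. unfold metric_derivative, christoffel_term.
  transitivity
    (sumI n (fun mu => sumI n (fun nu => sumI n (fun a => sumI n (fun l =>
       V a * Gm l a mu * G l nu * X nu * Y mu))))
   + sumI n (fun mu => sumI n (fun nu => sumI n (fun a => sumI n (fun l =>
       V a * Gm l a nu * G mu l * X nu * Y mu))))).
  { rewrite <- sumI_add. apply sumI_ext; intros mu _.
    rewrite <- sumI_add. apply sumI_ext; intros nu _.
    rewrite <- sumI_add, <- !sumI_mul_r. apply sumI_ext; intros a _.
    rewrite <- sumI_mul_l, <- !sumI_mul_r, <- sumI_add. apply sumI_ext; intros l _. ring. }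
  f_equal.
  - rewrite sumI_swap14. apply sumI_ext; intros l _; apply sumI_ext; intros nu _.
    rewrite <- sumI_mul_l. apply sumI_ext; intros a _.
    rewrite <- sumI_mul_l. apply sumI_ext; intros mu _. ring.
  - apply sumI_ext; intros mu _. rewrite sumI_rev3.
    apply sumI_ext; intros l _.
    transitivity (G mu l * Y mu * sumI n (fun a => sumI n (fun b => Gm l a b * V a * X b)));
      [|ring].
    rewrite <- sumI_mul_l. apply sumI_ext; intros a _.
    rewrite <- sumI_mul_l. apply sumI_ext; intros nu _. ring.
Qed.

Lemma derivable_pt_lim_sumI n (f : nat -> R -> R) (d : nat -> R) s :
  (forall i, (i < n)%nat -> derivable_pt_lim (f i) s (d i)) ->
  derivable_pt_lim (fun t => sumI n (fun i => f i t)) s (sumI n d).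
Proof.
  induction n as [|n IH]; intros Hd; simpl.
  - apply derivable_pt_lim_const.
  - apply (derivable_pt_lim_plus (fun t => sumI n (fun i => f i t)) (f n)).
    + apply IH; intros; apply Hd; lia.
    + apply Hd; lia.
Qed.

Lemma derivable_pt_lim_dot n (G : R -> nat -> nat -> R) dG (X Y : R -> nat -> R) dX dY s :
  (forall mu nu, (mu < n)%nat -> (nu < n)%nat ->
     derivable_pt_lim (fun t => G t mu nu) s (dG mu nu)) ->
  (forall mu, (mu < n)%nat -> derivable_pt_lim (fun t => X t mu) s (dX mu)) ->
  (forall mu, (mu < n)%nat -> derivable_pt_lim (fun t => Y t mu) s (dY mu)) ->
  derivable_pt_lim (fun t => dot n (G t) (X t) (Y t)) s
    (dot n dG (X s) (Y s) + dot n (G s) dX (Y s) + dot n (G s) (X s) dY).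
Proof.
  intros HG HX HY.
  replace (dot n dG (X s) (Y s) + dot n (G s) dX (Y s) + dot n (G s) (X s) dY) with
    (sumI n (fun mu => sumI n (fun nu => dG mu nu * X s nu + G s mu nu * dX nu) * Y s mu
                       + lower n (G s) (X s) mu * dY mu)).
  2:{ unfold dot, lower. rewrite <- !sumI_add. apply sumI_ext; intros mu _.
      rewrite sumI_add. ring. }
  apply (derivable_pt_lim_sumI n (fun mu t => lower n (G t) (X t) mu * Y t mu)).
  intros mu Hmu.
  apply (derivable_pt_lim_mult (fun t => lower n (G t) (X t) mu) (fun t => Y t mu));
    [|now apply HY].
  apply (derivable_pt_lim_sumI n (fun nu t => G t mu nu * X t nu)). intros nu Hnu.
  apply (derivable_pt_lim_mult (fun t => G t mu nu) (fun t => X t nu)); auto.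
Qed.

Lemma dot_christoffel_annihilated n G U Gm V (T : nat -> nat -> R) l :
  (forall b, (b < n)%nat -> dot n G U (fun mu => T mu b) = 0) ->
  dot n G U (fun mu => christoffel_term n Gm V (T mu) l) = 0.
Proof.
  intros HT. unfold dot, christoffel_term.
  transitivity (sumI n (fun mu => sumI n (fun a => sumI n (fun b =>
                  lower n G U mu * (Gm l a b * V a * T mu b))))).
  { apply sumI_ext; intros mu _. rewrite <- sumI_mul_l.
    apply sumI_ext; intros a _. symmetry; apply sumI_mul_l. }
  rewrite sumI_rev3. apply sumI_eq0; intros b Hb. apply sumI_eq0; intros a _.
  transitivity (Gm l a b * V a * dot n G U (fun mu => T mu b)).
  - unfold dot. rewrite <- sumI_mul_l. apply sumI_ext; intros mu _. ring.
  - rewrite HT by assumption. ring.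
Qed.

Section AlongCurve.

Variables (n : nat) (G : R -> nat -> nat -> R) (Gam : point -> nat -> nat -> nat -> R)
  (x : point) (V : nat -> R) (s : R).

Hypothesis metric_compat : forall mu nu, (mu < n)%nat -> (nu < n)%nat ->
  derivable_pt_lim (fun t => G t mu nu) s (metric_derivative n (G s) (Gam x) V mu nu).

Lemma derivable_pt_lim_dot_covD (X Y : R -> nat -> R) dX dY :
  (forall mu, (mu < n)%nat -> derivable_pt_lim (fun t => X t mu) s (dX mu)) ->
  (forall mu, (mu < n)%nat -> derivable_pt_lim (fun t => Y t mu) s (dY mu)) ->
  derivable_pt_lim (fun t => dot n (G t) (X t) (Y t)) s
    (dot n (G s) (covD_vec n Gam x V (X s) dX) (Y s)
     + dot n (G s) (X s) (covD_vec n Gam x V (Y s) dY)).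
Proof.
  intros HX HY.
  replace (dot n (G s) (covD_vec n Gam x V (X s) dX) (Y s)
           + dot n (G s) (X s) (covD_vec n Gam x V (Y s) dY))
    with (dot n (metric_derivative n (G s) (Gam x) V) (X s) (Y s)
          + dot n (G s) dX (Y s) + dot n (G s) (X s) dY).
  - now apply derivable_pt_lim_dot.
  - unfold covD_vec. rewrite dot_add_l, dot_add_r, dot_metric_derivative.
    unfold christoffel_term. ring.
Qed.

Lemma dot_covD_const (X Y : R -> nat -> R) dX dY c :
  (forall mu, (mu < n)%nat -> derivable_pt_lim (fun t => X t mu) s (dX mu)) ->
  (forall mu, (mu < n)%nat -> derivable_pt_lim (fun t => Y t mu) s (dY mu)) ->
  (forall t, dot n (G t) (X t) (Y t) = c) ->
  dot n (G s) (covD_vec n Gam x V (X s) dX) (Y s)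
  + dot n (G s) (X s) (covD_vec n Gam x V (Y s) dY) = 0.
Proof.
  intros HX HY Hc.
  apply (uniqueness_limite (fun _ => c) s).
  - apply (derivable_pt_lim_ext (fun t => dot n (G t) (X t) (Y t))); [easy|].
    now apply derivable_pt_lim_dot_covD.
  - apply derivable_pt_lim_const.
Qed.

Lemma covD_unit_orthogonal (U : R -> nat -> R) dU c :
  (forall i j, (i < n)%nat -> (j < n)%nat -> G s i j = G s j i) ->
  (forall mu, (mu < n)%nat -> derivable_pt_lim (fun t => U t mu) s (dU mu)) ->
  (forall t, dot n (G t) (U t) (U t) = c) ->
  dot n (G s) (covD_vec n Gam x V (U s) dU) (U s) = 0.
Proof.
  intros Gsym HU Hc.
  pose proof (dot_covD_const U U dU dU c HU HU Hc) as E.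
  rewrite (dot_sym n (G s) (U s)) in E by assumption. lra.
Qed.

Lemma covD_spin_constraint (U : R -> nat -> R) dU (T : R -> nat -> nat -> R) dT l :
  (l < n)%nat ->
  (forall mu, (mu < n)%nat -> derivable_pt_lim (fun t => U t mu) s (dU mu)) ->
  (forall k, (k < n)%nat -> derivable_pt_lim (fun t => T t k l) s (dT k l)) ->
  (forall t b, (b < n)%nat -> dot n (G t) (U t) (fun mu => T t mu b) = 0) ->
  dot n (G s) (U s) (fun mu => covD_2 n Gam x V (T s) dT mu l)
  = - dot n (G s) (covD_vec n Gam x V (U s) dU) (fun mu => T s mu l).
Proof.
  intros Hl HU HT Hann.
  transitivity (dot n (G s) (U s) (covD_vec n Gam x V (fun mu => T s mu l) (fun mu => dT mu l))).
  - change (fun mu => covD_2 n Gam x V (T s) dT mu l) with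
      (fun mu => covD_vec n Gam x V (fun m => T s m l) (fun m => dT m l) mu
                 + christoffel_term n (Gam x) V (T s mu) l).
    rewrite dot_add_r, dot_christoffel_annihilated by auto. ring.
  - pose proof (dot_covD_const U (fun t mu => T t mu l) dU (fun mu => dT mu l) 0 HU HT
                  (fun t => Hann t l Hl)) as E.
    lra.
Qed.

End AlongCurve.

Lemma derivative_opp f h df dh s : (forall t, f t = - h t) ->
  derivable_pt_lim f s df -> derivable_pt_lim h s dh -> df = - dh.
Proof.
  intros E Hf Hh. apply (uniqueness_limite f s); [easy|].
  apply (derivable_pt_lim_ext (fun t => - h t)); [intros; now rewrite E|].
  now apply derivable_pt_lim_opp.
Qed.

Lemma derivative_mult f a b df da db s : (forall t, f t = a t * b t) ->
  derivable_pt_lim f s df -> derivable_pt_lim a s da -> derivable_pt_lim b s db ->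
  df = da * b s + a s * db.
Proof.
  intros E Hf Ha Hb. apply (uniqueness_limite f s); [easy|].
  apply (derivable_pt_lim_ext (fun t => a t * b t)); [intros; now rewrite E|].
  now apply derivable_pt_lim_mult.
Qed.

Lemma covD_2_antisym n Gam x V (T dT : nat -> nat -> R) :
  (forall k l, (k < n)%nat -> (l < n)%nat -> T k l = - T l k) ->
  (forall k l, (k < n)%nat -> (l < n)%nat -> dT k l = - dT l k) ->
  forall k l, (k < n)%nat -> (l < n)%nat ->
  covD_2 n Gam x V T dT k l = - covD_2 n Gam x V T dT l k.
Proof.
  intros HT HdT k l Hk Hl. unfold covD_2. rewrite (HdT k l) by assumption.
  assert (Ek : sumI n (fun a => sumI n (fun b => Gam x k a b * V a * T b l))
               = - sumI n (fun a => sumI n (fun b => Gam x k a b * V a * T l b))).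
  { rewrite <- sumI_opp. apply sumI_ext; intros a _.
    rewrite <- sumI_opp. apply sumI_ext; intros b Hb. rewrite HT by assumption. ring. }
  assert (El : sumI n (fun a => sumI n (fun b => Gam x l a b * V a * T k b))
               = - sumI n (fun a => sumI n (fun b => Gam x l a b * V a * T b k))).
  { rewrite <- sumI_opp. apply sumI_ext; intros a _.
    rewrite <- sumI_opp. apply sumI_ext; intros b Hb. rewrite (HT k b) by assumption. ring. }
  lra.
Qed.

Lemma covD_vec_scale n Gam x V (c dc : R) (U dU P dP : nat -> R) mu :
  (forall i, (i < n)%nat -> P i = c * U i) -> dP mu = dc * U mu + c * dU mu ->
  covD_vec n Gam x V P dP mu = dc * U mu + c * covD_vec n Gam x V U dU mu.
Proof.
  intros HP HdP. unfold covD_vec. rewrite HdP.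
  assert (E : sumI n (fun a => sumI n (fun b => Gam x mu a b * V a * P b))
              = c * sumI n (fun a => sumI n (fun b => Gam x mu a b * V a * U b))).
  { rewrite <- sumI_mul_l. apply sumI_ext; intros a _.
    rewrite <- sumI_mul_l. apply sumI_ext; intros b Hb. rewrite HP by assumption. ring. }
  rewrite E. ring.
Qed.

Lemma dot_riemann_tangent n G (A : nat -> nat -> R) (v : nat -> R)
    (Riem : nat -> nat -> nat -> nat -> R) :
  (forall i j, (i < n)%nat -> (j < n)%nat -> G i j = G j i) ->
  (forall k l m r, (k < n)%nat -> (l < n)%nat -> (m < n)%nat -> (r < n)%nat ->
     sumI n (fun nu => Riem k l m nu * G nu r) = - sumI n (fun nu => Riem k l r nu * G nu m)) ->
  dot n G (fun nu => sumI n (fun k => sumI n (fun l => sumI n (fun m =>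
             A k l * v m * Riem k l m nu)))) v = 0.
Proof.
  intros Gsym R34.
  rewrite dot_sum_l. apply sumI_eq0; intros k Hk.
  rewrite dot_sum_l. apply sumI_eq0; intros l Hl.
  rewrite dot_sum_l.
  transitivity (A k l * sumI n (fun m => sumI n (fun r =>
                  v m * v r * sumI n (fun nu => Riem k l m nu * G nu r)))).
  { rewrite <- sumI_mul_l. apply sumI_ext; intros m Hm.
    rewrite dot_scal_l, dot_sym, dot_expand by assumption.
    rewrite Rmult_assoc. f_equal. rewrite sumI_swap, <- sumI_mul_l.
    apply sumI_ext; intros r Hr. rewrite <- !sumI_mul_l.
    apply sumI_ext; intros nu Hnu. rewrite (Gsym nu r) by assumption. ring. }
  rewrite sumI_antisym; [ring|].
  intros m r Hm Hr. rewrite R34 by assumption. ring.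
Qed.

Lemma force_dot_tangent n G (Dp u Du v W : nat -> R) dM M :
  (forall i, (i < n)%nat -> Dp i = dM * u i + M * Du i) -> dot n G W v = 0 ->
  dot n G (fun nu => Dp nu - / 2 * W nu) v = dM * dot n G u v + M * dot n G Du v.
Proof.
  intros HDp HW.
  rewrite dot_sub_l, dot_scal_l, HW.
  rewrite (dot_ext n G Dp (fun i => dM * u i + M * Du i) v v) by auto.
  rewrite dot_add_l, !dot_scal_l. ring.
Qed.

Lemma torque_contraction n G (u Du v p : nat -> R) (S DS : nat -> nat -> R) M :
  (forall i j, (i < n)%nat -> (j < n)%nat -> G i j = G j i) ->
  (forall k l, (k < n)%nat -> (l < n)%nat -> S k l = - S l k) ->
  (forall k l, (k < n)%nat -> (l < n)%nat -> DS k l = - DS l k) ->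
  dot n G u u = -1 -> dot n G Du u = 0 -> (forall i, (i < n)%nat -> p i = M * u i) ->
  (forall l, (l < n)%nat -> dot n G u (fun k => DS k l) = - dot n G Du (fun k => S k l)) ->
  sumI n (fun mu => sumI n (fun nu =>
    lower n G u nu * lower n G Du mu * (DS mu nu - (p mu * v nu - p nu * v mu))))
  = - M * dot n G Du v.
Proof.
  intros Gsym HS HDS Hu HDu Hp Hspin.
  transitivity (sumI n (fun mu => lower n G Du mu * sumI n (fun nu => lower n G u nu * DS mu nu))
                - dot n G Du p * dot n G u v + dot n G Du v * dot n G u p).
  { unfold dot. rewrite !sumI_mul, <- sumI_sub, <- sumI_add. apply sumI_ext; intros mu _.
    rewrite <- sumI_mul_l, <- sumI_sub, <- sumI_add. apply sumI_ext; intros nu _. ring. }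
  assert (Hrot : sumI n (fun mu => lower n G Du mu * sumI n (fun nu => lower n G u nu * DS mu nu))
                 = 0).
  { transitivity (sumI n (fun mu => sumI n (fun nu => lower n G Du mu * lower n G Du nu * S nu mu))).
    - apply sumI_ext; intros mu Hmu.
      transitivity (lower n G Du mu * - dot n G u (fun nu => DS nu mu)).
      + f_equal. unfold dot. rewrite <- sumI_opp. apply sumI_ext; intros nu Hnu.
        rewrite HDS by assumption. ring.
      + rewrite Hspin, Ropp_involutive by assumption. unfold dot.
        rewrite <- sumI_mul_l. apply sumI_ext; intros nu _. ring.
    - apply sumI_antisym. intros i j Hi Hj. rewrite (HS j i) by assumption. ring. }
  assert (HDup : dot n G Du p = 0).
  { rewrite (dot_ext n G Du Du p (fun i => M * u i)), dot_scal_r, HDu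
      by auto. ring. }
  assert (Hup : dot n G u p = - M).
  { rewrite (dot_ext n G u u p (fun i => M * u i)), dot_scal_r, Hu by auto. ring. }
  rewrite Hrot, HDup, Hup. ring.
Qed.

Theorem mainTheorem8
  (n : nat)
  (g : point -> nat -> nat -> R)
  (Gam : point -> nat -> nat -> nat -> R)
  (Riem : point -> nat -> nat -> nat -> nat -> R)
  (z v : R -> nat -> R)
  (p dp u du : R -> nat -> R)
  (S dS : R -> nat -> nat -> R)
  (M dM : R -> R)
  (* Lorentzian metric *)
  (hg : forall x, lorentzian n (g x))
  (* torsion-free connection *)
  (hGsym : forall x l a b, (l < n)%nat -> (a < n)%nat -> (b < n)%nat ->
             Gam x l a b = Gam x l b a)
  (* metric compatibility along the curve: d/ds g_{mu nu}(z(s)) = v^a (Gamma^l_{a mu} g_{l nu} + Gamma^l_{a nu} g_{mu l}) *)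
  (hGmet : forall s mu nu, (mu < n)%nat -> (nu < n)%nat ->
             derivable_pt_lim (fun t => g (z t) mu nu) s
               (sumI n (fun a => v s a *
                  sumI n (fun l => Gam (z s) l a mu * g (z s) l nu
                                  + Gam (z s) l a nu * g (z s) mu l))))
  (* Riemann tensor: antisymmetric in its first two and in its last two indices *)
  (hR12 : forall x k l m nu, (k < n)%nat -> (l < n)%nat -> (m < n)%nat -> (nu < n)%nat ->
            Riem x k l m nu = - Riem x l k m nu)
  (hR34 : forall x k l m r, (k < n)%nat -> (l < n)%nat -> (m < n)%nat -> (r < n)%nat ->
            sumI n (fun nu => Riem x k l m nu * g x nu r)
            = - sumI n (fun nu => Riem x k l r nu * g x nu m))
  (* C^1 curve with tangent v *)
  (hz : forall s mu, derivable_pt_lim (fun t => z t mu) s (v s mu))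
  (hvc : forall mu, continuity (fun s => v s mu))
  (* differentiability of p, S, u, M *)
  (hp' : forall s mu, derivable_pt_lim (fun t => p t mu) s (dp s mu))
  (hS' : forall s k l, derivable_pt_lim (fun t => S t k l) s (dS s k l))
  (hu' : forall s mu, derivable_pt_lim (fun t => u t mu) s (du s mu))
  (hM' : forall s, derivable_pt_lim M s (dM s))
  (* hypotheses *)
  (hSanti : forall s k l, (k < n)%nat -> (l < n)%nat -> S s k l = - S s l k)
  (hunit : forall s, dot n (g (z s)) (u s) (u s) = -1)
  (hMpos : forall s, 0 < M s)
  (hpMu : forall s mu, (mu < n)%nat -> p s mu = M s * u s mu)
  (huS : forall s nu, (nu < n)%nat ->
           sumI n (fun mu => lower n (g (z s)) (u s) mu * S s mu nu) = 0)
  (huv : forall s, dot n (g (z s)) (u s) (v s) <> 0) :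
  forall s : R,
    let x := z s in
    let Dp := covD_vec n Gam x (v s) (p s) (dp s) in
    let Du := covD_vec n Gam x (v s) (u s) (du s) in
    let DS := covD_2 n Gam x (v s) (S s) (dS s) in
    (* F^nu = Dp^nu - 1/2 S^{kl} v^m R_{klm}^nu *)
    let F := fun nu => Dp nu - / 2 * sumI n (fun k => sumI n (fun l => sumI n (fun m =>
                 S s k l * v s m * Riem x k l m nu))) in
    (* L^{kl} = DS^{kl} - 2 p^[k v^l] = DS^{kl} - (p^k v^l - p^l v^k) *)
    let L := fun k l => DS k l - (p s k * v s l - p s l * v s k) in
    dM s = / dot n (g x) (u s) (v s) *
      (dot n (g x) F (v s)
       + sumI n (fun mu => sumI n (fun nu =>
           lower n (g x) (u s) nu * lower n (g x) Du mu * L mu nu))).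

Proof.
  intros s x Dp Du DS F L.
  pose proof (proj1 (hg x)) as Gsym.
  assert (compat : forall mu nu, (mu < n)%nat -> (nu < n)%nat ->
            derivable_pt_lim (fun t => g (z t) mu nu) s
              (metric_derivative n (g x) (Gam x) (v s) mu nu)) by exact (hGmet s).
  assert (Du_u : dot n (g x) Du (u s) = 0)
    by exact (covD_unit_orthogonal n _ Gam x (v s) s compat u (du s) (-1) Gsym
                (fun mu _ => hu' s mu) hunit).
  assert (spin : forall l, (l < n)%nat ->
            dot n (g x) (u s) (fun k => DS k l) = - dot n (g x) Du (fun k => S s k l))
    by (intros l Hl; exact (covD_spin_constraint n _ Gam x (v s) s compat u (du s) S (dS s) l Hl
                              (fun mu _ => hu' s mu) (fun k _ => hS' s k l) huS)).
  assert (DS_anti : forall k l, (k < n)%nat -> (l < n)%nat -> DS k l = - DS l k).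
  { apply covD_2_antisym; [exact (hSanti s)|].
    intros k l Hk Hl. apply (derivative_opp (fun t => S t k l) (fun t => S t l k) _ _ s);
      auto using hSanti. }
  assert (momentum : forall mu, (mu < n)%nat -> Dp mu = dM s * u s mu + M s * Du mu).
  { intros mu Hmu. apply covD_vec_scale; [exact (hpMu s)|].
    apply (derivative_mult (fun t => p t mu) M (fun t => u t mu)); auto. }
  unfold F, L.
  rewrite (force_dot_tangent n (g x) Dp (u s) Du (v s) _ (dM s) (M s) momentum)
    by (apply dot_riemann_tangent; auto).
  rewrite (torque_contraction n (g x) (u s) Du (v s) (p s) (S s) DS (M s)
             Gsym (hSanti s) DS_anti (hunit s) Du_u (hpMu s) spin).
  field. apply huv.
Qed.
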